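(* Let $M=I\times_{\phi^{p_1}}F_1\times_{\phi^{p_2}}F_2\times_{\phi^{p_3}}F_3$ be a generalized Kasner spacetime with $\dim F_1=\dim F_2=\dim F_3=1$ and $P=\partial/\partial t$. Then the scalar curvature $\overline S$ of $(M,\overline\nabla)$ is constant if and only if one of the following holds: (1) $\zeta=\eta=0$ and $\overline S=3$; (2) $\zeta=0$, $\eta\neq0$, and: $\overline S>3$ is impossible; if $\overline S=3$ then $\phi$ is constant; if $\overline S<3$ then $\phi(t)=c_0e^{\pm\sqrt{-(\overline S-3)/\eta}\,t}$ for a constant $c_0>0$; (3) $\zeta\neq0$, and with $\triangle=\frac94-\frac{(\overline S-3)(\eta+\zeta^2)}{\zeta^2}$ and real constants $c_1,c_2$ making the base positive on $I$: (3a) if $\overline S<\frac{9\zeta^2}{4(\eta+\zeta^2)}+3$: $\phi=\Big(c_1e^{\frac{\frac32+\sqrt\triangle}{2}t}+c_2e^{\frac{\frac32-\sqrt\triangle}{2}t}\Big)^{\frac{2\zeta}{\eta+\zeta^2}}$; (3b) if $\overline S=\frac{9\zeta^2}{4(\eta+\zeta^2)}+3$: $\phi=\big(c_1e^{\frac34t}+c_2te^{\frac34t}\big)^{\frac{2\zeta}{\eta+\zeta^2}}$; (3c) if $\overline S>\frac{9\zeta^2}{4(\eta+\zeta^2)}+3$: $\phi=\Big(c_1e^{\frac34t}\cos\big(\frac{\sqrt{-\triangle}}2t\big)+c_2e^{\frac34t}\sin\big(\frac{\sqrt{-\triangle}}2t\big)\Big)^{\frac{2\zeta}{\eta+\ze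ta^2}}$.
   Context: A generalized Kasner spacetime is $M=I\times F_1\times\cdots\times F_m$, $I=(t_1,t_2)$, Riemannian $(F_i,g_{F_i})$, $l_i=\dim F_i$, metric $g=-dt^2\oplus\phi^{2p_1}g_{F_1}\oplus\cdots\oplus\phi^{2p_m}g_{F_m}$ with $\phi:I\to(0,\infty)$ smooth, $p_i\in\mathbb R$; $\zeta=\sum_il_ip_i$, $\eta=\sum_il_ip_i^2$. $\nabla$ Levi-Civita of $g$, $\pi(X)=g(X,P)$, $\overline\nabla_XY=\nabla_XY+\pi(Y)X$. Curvature $R(X,Y)Z=\nabla_X\nabla_YZ-\nabla_Y\nabla_XZ-\nabla_{[X,Y]}Z$; Ricci $\mathrm{Ric}(X,Y)=\sum_k\varepsilon_kg(R(X,E_k)Y,E_k)$; scalar curvature $S=\sum_k\varepsilon_k\mathrm{Ric}(E_k,E_k)$ over local orthonormal frames, $\varepsilon_k=g(E_k,E_k)$. *)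

From Stdlib Require Import Reals ClassicalEpsilon.
Open Scope R_scope.

(* The derivative of f at t (meaningful where f is differentiable). *)
Definition Dt (f : R -> R) (t : R) : R :=
  epsilon (inhabits 0) (fun l => derivable_pt_lim f t l).

Fixpoint Dtn (n : nat) (f : R -> R) : R -> R :=
  match n with O => f | S m => Dt (Dtn m f) end.

Definition smooth_on (t1 t2 : R) (f : R -> R) : Prop :=
  forall (n : nat) (t : R), t1 < t < t2 ->
    exists l, derivable_pt_lim (Dtn n f) t l.

(* ---------- coordinate computation on M = I x F1 x F2 x F3 ----------
   Coordinates (x0,x1,x2,x3) = (t, s1, s2, s3), s_i an arc-length coordinate
   on the 1-dimensional Riemannian manifold F_i (so g_{F_i} = ds_i^2 locally).
   All metric data depend on t only. *)

Definition sum4 (f : nat -> R) : R := f 0%nat + f 1%nat + f 2%nat + f 3%nat.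

Definition kdelta (i j : nat) : R := if Nat.eqb i j then 1 else 0.

Definition expo (p1 p2 p3 : R) (i : nat) : R :=
  match i with 1%nat => p1 | 2%nat => p2 | _ => p3 end.

Definition gK (p1 p2 p3 : R) (phi : R -> R) (i j : nat) (t : R) : R :=
  if Nat.eqb i j then
    (if Nat.eqb i 0 then -1 else Rpower (phi t) (2 * expo p1 p2 p3 i))
  else 0.

(* inverse metric (the metric is diagonal) *)
Definition gKinv (p1 p2 p3 : R) (phi : R -> R) (i j : nat) (t : R) : R :=
  if Nat.eqb i j then / gK p1 p2 p3 phi i i t else 0.

(* partial derivative along coordinate k of a quantity depending on t only *)
Definition dcoord (k : nat) (f : R -> R) (t : R) : R :=
  if Nat.eqb k 0 then Dt f t else 0.

(* Levi-Civita Christoffel symbols: nabla_{d_i} d_j = sum_k LC k i j d_k *)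
Definition LC (p1 p2 p3 : R) (phi : R -> R) (k i j : nat) (t : R) : R :=
  sum4 (fun l => / 2 * gKinv p1 p2 p3 phi k l t *
    (dcoord i (gK p1 p2 p3 phi j l) t + dcoord j (gK p1 p2 p3 phi i l) t
     - dcoord l (gK p1 p2 p3 phi i j) t)).

(* pi(d_j) = g(d_j, P) with P = d/dt *)
Definition piP (p1 p2 p3 : R) (phi : R -> R) (j : nat) (t : R) : R :=
  gK p1 p2 p3 phi j 0%nat t.

(* connection nablabar_X Y = nabla_X Y + pi(Y) X:
   nablabar_{d_i} d_j = sum_k Conn k i j d_k *)
Definition Conn (p1 p2 p3 : R) (phi : R -> R) (k i j : nat) (t : R) : R :=
  LC p1 p2 p3 phi k i j t + piP p1 p2 p3 phi j t * kdelta k i.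

(* Rbar(d_i,d_j) d_k = sum_l Curv l k i j d_l, with
   R(X,Y)Z = nabla_X nabla_Y Z - nabla_Y nabla_X Z - nabla_[X,Y] Z *)
Definition Curv (p1 p2 p3 : R) (phi : R -> R) (l k i j : nat) (t : R) : R :=
  dcoord i (fun s => Conn p1 p2 p3 phi l j k s) t
  - dcoord j (fun s => Conn p1 p2 p3 phi l i k s) t
  + sum4 (fun m => Conn p1 p2 p3 phi m j k t * Conn p1 p2 p3 phi l i m t
                   - Conn p1 p2 p3 phi m i k t * Conn p1 p2 p3 phi l j m t).

(* Ric(X,Y) = sum_k eps_k g(R(X,E_k)Y,E_k) = trace (Z |-> R(X,Z)Y) *)
Definition RicBar (p1 p2 p3 : R) (phi : R -> R) (i j : nat) (t : R) : R :=
  sum4 (fun a => Curv p1 p2 p3 phi a j i a t).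

Definition ScalBar (p1 p2 p3 : R) (phi : R -> R) (t : R) : R :=
  sum4 (fun i => sum4 (fun j => gKinv p1 p2 p3 phi i j t * RicBar p1 p2 p3 phi i j t)).

(* zeta = sum l_i p_i, eta = sum l_i p_i^2 with l_i = 1 *)
Definition kzeta (p1 p2 p3 : R) : R := p1 + p2 + p3.
Definition keta (p1 p2 p3 : R) : R := p1 ^ 2 + p2 ^ 2 + p3 ^ 2.

From Stdlib Require Import Reals Lra Lia ClassicalEpsilon.
From Coquelicot Require Import Coquelicot.
Open Scope R_scope.

(* Write u = phi'/phi for the logarithmic derivative of the warping
   function.  A direct computation of the Christoffel symbols of nablabar and
   of their t-derivatives gives the reduced formula
       Sbar = -2 zeta u' - (eta + zeta^2) u^2 + 3 zeta u + 3,
   so the theorem is a classification of the solutions of this Riccati-type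
   equation with Sbar = c constant.
   - If zeta = 0 the equation reads eta u^2 = 3 - c: u is constant, hence phi
     is an exponential (a constant when c = 3), and c <= 3 when eta > 0.
   - If zeta <> 0 the substitution phi = w^(2 zeta/(eta+zeta^2)) removes the
     quadratic term: Sbar = c iff w'' = 3/2 w' - (c-3)(eta+zeta^2)/(4 zeta^2) w.
     The three shapes of (3) are the solutions of this linear equation with
     constant coefficients, according to the sign of its discriminant. *)

Lemma Dt_eq f t l : derivable_pt_lim f t l -> Dt f t = l.
Proof.
  intros H. unfold Dt. apply (uniqueness_limite f t); [|exact H].
  apply epsilon_spec. exists l; exact H.
Qed.

Lemma Dt_const c t : Dt (fun _ => c) t = 0.
Proof. apply Dt_eq. apply derivable_pt_lim_const. Qed.

Lemma smooth_derivable t1 t2 f (n : nat) : smooth_on t1 t2 f ->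
  forall t, t1 < t < t2 -> derivable_pt_lim (Dtn n f) t (Dtn (S n) f t).
Proof.
  intros Hsm t Ht. destruct (Hsm n t Ht) as [l Hl]. simpl.
  rewrite (Dt_eq _ _ _ Hl). exact Hl.
Qed.

Lemma derivable_local t1 t2 f g t l :
  (forall s, t1 < s < t2 -> f s = g s) -> t1 < t < t2 ->
  derivable_pt_lim g t l -> derivable_pt_lim f t l.
Proof.
  intros Hfg Ht Hg eps Heps.
  destruct (Hg eps Heps) as [d Hd].
  assert (Hm : 0 < Rmin d (Rmin (t - t1) (t2 - t))).
  { apply Rmin_pos; [apply cond_pos|apply Rmin_pos; lra]. }
  exists (mkposreal _ Hm). intros h Hh0 Hh. simpl in Hh.
  assert (H1 := Rmin_l d (Rmin (t - t1) (t2 - t))).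
  assert (H2 := Rmin_r d (Rmin (t - t1) (t2 - t))).
  assert (H3 := Rmin_l (t - t1) (t2 - t)).
  assert (H4 := Rmin_r (t - t1) (t2 - t)).
  assert (Habs := Rabs_def2 h _ Hh).
  rewrite (Hfg (t + h)), (Hfg t) by lra.
  apply Hd; auto. lra.
Qed.

Lemma Dt_local t1 t2 f g t l :
  (forall s, t1 < s < t2 -> f s = g s) -> t1 < t < t2 ->
  derivable_pt_lim g t l -> Dt f t = l.
Proof. intros; apply Dt_eq; eapply derivable_local; eauto. Qed.

Lemma Rpower_pos x y : 0 < Rpower x y.
Proof. unfold Rpower. apply exp_pos. Qed.

Lemma derivable_Rpower_comp f x l q : 0 < f x -> derivable_pt_lim f x l ->
  derivable_pt_lim (fun s => Rpower (f s) q) x (q * (l / f x) * Rpower (f x) q).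
Proof.
  intros Hp Hd.
  assert (H := derivable_pt_lim_comp f (fun y => Rpower y q) x l _ Hd
                 (derivable_pt_lim_power (f x) q Hp)).
  unfold comp in H.
  replace (q * (l / f x) * Rpower (f x) q) with (q * Rpower (f x) (q - 1) * l); auto.
  unfold Rminus. rewrite Rpower_plus, Rpower_Ropp, Rpower_1 by auto.
  field. lra.
Qed.

(* Bridges to Coquelicot, whose [auto_derive] computes derivatives. *)
Lemma Derive_of_lim f s l : derivable_pt_lim f s l -> Derive (fun x => f x) s = l.
Proof. intros H. apply is_derive_unique. apply is_derive_Reals. exact H. Qed.

Lemma ex_derive_of_lim f s l : derivable_pt_lim f s l -> ex_derive (fun x => f x) s.
Proof. intros H. exists l. apply is_derive_Reals. exact H. Qed.

Lemma derivative_zero_constant t1 t2 f : t1 < t2 ->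
  (forall s, t1 < s < t2 -> derivable_pt_lim f s 0) ->
  exists K, forall s, t1 < s < t2 -> f s = K.
Proof.
  intros Ht H.
  assert (Hlt : forall x y, t1 < x < t2 -> t1 < y < t2 -> x < y -> f x = f y).
  { intros x y Hx Hy Hxy.
    destruct (MVT_cor2 f (fun _ => 0) x y Hxy) as [m [Hm _]].
    - intros m Hm. apply H. lra.
    - lra. }
  exists (f ((t1 + t2) / 2)). intros s Hs.
  destruct (Rtotal_order s ((t1 + t2) / 2)) as [h|[h|h]].
  - apply Hlt; auto; lra.
  - now rewrite h.
  - symmetry; apply Hlt; auto; lra.
Qed.

Lemma square_const_constant t1 t2 f f' K : t1 < t2 -> K <> 0 ->
  (forall s, t1 < s < t2 -> derivable_pt_lim f s (f' s)) ->
  (forall s, t1 < s < t2 -> f s * f s = K) ->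
  exists f0, forall s, t1 < s < t2 -> f s = f0.
Proof.
  intros Ht HK Hd Hsq. apply (derivative_zero_constant t1 t2 f Ht).
  intros s Hs.
  assert (Hmul := derivable_pt_lim_mult _ _ s _ _ (Hd s Hs) (Hd s Hs)).
  assert (Hcst : derivable_pt_lim (fun x => f x * f x) s 0).
  { apply (derivable_local t1 t2 _ (fun _ => K)); auto.
    apply derivable_pt_lim_const. }
  assert (E := uniqueness_limite _ _ _ _ Hmul Hcst). simpl in E.
  assert (Hf : f s <> 0) by (intro H0; apply HK; rewrite <- (Hsq s Hs), H0; ring).
  replace 0 with (f' s); [exact (Hd s Hs)|].
  apply (Rmult_eq_reg_l (2 * f s)); [lra|]. intro H0; apply Hf; lra.
Qed.

Lemma linear_first_order t1 t2 r v v1 : t1 < t2 ->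
  (forall s, t1 < s < t2 -> derivable_pt_lim v s (v1 s)) ->
  (forall s, t1 < s < t2 -> v1 s = r * v s) ->
  exists A, forall s, t1 < s < t2 -> v s = A * exp (r * s).
Proof.
  intros Ht Hd He.
  destruct (derivative_zero_constant t1 t2 (fun x => v x * exp (- r * x)) Ht) as [K HK].
  { intros s Hs. apply is_derive_Reals. auto_derive.
    - apply (ex_derive_of_lim _ _ _ (Hd s Hs)).
    - rewrite (Derive_of_lim _ _ _ (Hd s Hs)), He by auto. ring. }
  exists K. intros s Hs. rewrite <- (HK s Hs).
  rewrite Rmult_assoc, <- exp_plus. replace (- r * s + r * s) with 0 by ring.
  rewrite exp_0. ring.
Qed.

Definition solves_ode (t1 t2 b be : R) (w : R -> R) : Prop :=
  exists w1 w2, forall s, t1 < s < t2 ->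
    derivable_pt_lim w s (w1 s) /\ derivable_pt_lim w1 s (w2 s) /\
    w2 s = b * w1 s - be * w s.

Lemma solves_ode_local t1 t2 b be w f :
  (forall s, t1 < s < t2 -> w s = f s) ->
  solves_ode t1 t2 b be f -> solves_ode t1 t2 b be w.
Proof.
  intros Hwf [f1 [f2 Hf]]. exists f1, f2. intros s Hs.
  destruct (Hf s Hs) as [D1 [D2 E]]. rewrite (Hwf s Hs).
  repeat split; auto. exact (derivable_local t1 t2 w f s _ Hwf Hs D1).
Qed.

Section LinearODE.

Variables (t1 t2 b be : R).
Hypothesis Hint : t1 < t2.

Lemma ode_distinct_roots r1 r2 w : r1 <> r2 -> r1 + r2 = b -> r1 * r2 = be ->
  solves_ode t1 t2 b be w <->
  exists c1 c2, forall s, t1 < s < t2 -> w s = c1 * exp (r1 * s) + c2 * exp (r2 * s).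
Proof.
  intros Hr Hb Hbe. split.
  - intros [w1 [w2 Hw]].
    destruct (linear_first_order t1 t2 r1 (fun x => w1 x - r2 * w x)
                (fun x => w2 x - r2 * w1 x) Hint) as [A HA].
    { intros s Hs. destruct (Hw s Hs) as [D1 [D2 _]].
      apply derivable_pt_lim_minus; auto. apply derivable_pt_lim_scal; auto. }
    { intros s Hs. destruct (Hw s Hs) as [_ [_ E]]. rewrite E, <- Hb, <- Hbe. ring. }
    destruct (linear_first_order t1 t2 r2 (fun x => w1 x - r1 * w x)
                (fun x => w2 x - r1 * w1 x) Hint) as [B HB].
    { intros s Hs. destruct (Hw s Hs) as [D1 [D2 _]].
      apply derivable_pt_lim_minus; auto. apply derivable_pt_lim_scal; auto. }
    { intros s Hs. destruct (Hw s Hs) as [_ [_ E]]. rewrite E, <- Hb, <- Hbe. ring. }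
    exists (A / (r1 - r2)), (- B / (r1 - r2)). intros s Hs.
    specialize (HA s Hs). specialize (HB s Hs). simpl in HA, HB.
    apply (Rmult_eq_reg_l (r1 - r2)); [|lra].
    field_simplify; [|lra]. nra.
  - intros [c1 [c2 Hw]]. apply (solves_ode_local _ _ _ _ _ _ Hw).
    exists (fun x => c1 * r1 * exp (r1 * x) + c2 * r2 * exp (r2 * x)),
           (fun x => c1 * r1 * r1 * exp (r1 * x) + c2 * r2 * r2 * exp (r2 * x)).
    intros s _. subst. repeat split; try ring; apply is_derive_Reals; auto_derive; auto; ring.
Qed.

Lemma ode_double_root r w : 2 * r = b -> r * r = be ->
  solves_ode t1 t2 b be w <->
  exists c1 c2, forall s, t1 < s < t2 -> w s = c1 * exp (r * s) + c2 * s * exp (r * s).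
Proof.
  intros Hb Hbe. split.
  - intros [w1 [w2 Hw]].
    destruct (linear_first_order t1 t2 r (fun x => w1 x - r * w x)
                (fun x => w2 x - r * w1 x) Hint) as [A HA].
    { intros s Hs. destruct (Hw s Hs) as [D1 [D2 _]].
      apply derivable_pt_lim_minus; auto. apply derivable_pt_lim_scal; auto. }
    { intros s Hs. destruct (Hw s Hs) as [_ [_ E]]. rewrite E, <- Hb, <- Hbe. ring. }
    (* w e^{-rs} is affine: its derivative is the constant A *)
    destruct (derivative_zero_constant t1 t2 (fun x => w x * exp (- r * x) - A * x) Hint)
      as [B HB].
    { intros s Hs. destruct (Hw s Hs) as [D1 _].
      apply is_derive_Reals. auto_derive.
      - apply (ex_derive_of_lim _ _ _ D1).
      - rewrite (Derive_of_lim _ _ _ D1).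
        assert (E : w1 s = A * exp (r * s) + r * w s) by (specialize (HA s Hs); simpl in HA; lra).
        rewrite E.
        replace (- r * s) with (- (r * s)) by ring. rewrite exp_Ropp.
        field. apply Rgt_not_eq, exp_pos. }
    exists B, A. intros s Hs. specialize (HB s Hs).
    assert (E : w s = (w s * exp (- r * s)) * exp (r * s)).
    { rewrite Rmult_assoc, <- exp_plus. replace (- r * s + r * s) with 0 by ring.
      rewrite exp_0. ring. }
    rewrite E. replace (w s * exp (- r * s)) with (B + A * s) by lra. ring.
  - intros [c1 [c2 Hw]]. apply (solves_ode_local _ _ _ _ _ _ Hw).
    exists (fun x => c2 * exp (r * x) + r * (c1 * exp (r * x) + c2 * x * exp (r * x))),
           (fun x => 2 * r * c2 * exp (r * x) + r * r * (c1 * exp (r * x) + c2 * x * exp (r * x))).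
    intros s _. subst. repeat split; try ring; apply is_derive_Reals; auto_derive; auto; ring.
Qed.

Lemma ode_complex_roots al ga w : ga <> 0 -> 2 * al = b -> al * al + ga * ga = be ->
  solves_ode t1 t2 b be w <->
  exists c1 c2, forall s, t1 < s < t2 ->
    w s = c1 * exp (al * s) * cos (ga * s) + c2 * exp (al * s) * sin (ga * s).
Proof.
  intros Hg Hb Hbe. split.
  - intros [w1 [w2 Hw]].
    (* the two real coordinates of e^{-(al + i ga) s} (w' - (al - i ga) w) are conserved *)
    destruct (derivative_zero_constant t1 t2 (fun x => exp (- al * x) *
       (w x * cos (ga * x) - ((w1 x - al * w x) / ga) * sin (ga * x))) Hint) as [C HC].
    { intros s Hs. destruct (Hw s Hs) as [D1 [D2 E]].
      apply is_derive_Reals. auto_derive.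
      - repeat split; auto; first [apply (ex_derive_of_lim _ _ _ D1)|apply (ex_derive_of_lim _ _ _ D2)].
      - rewrite (Derive_of_lim _ _ _ D1), (Derive_of_lim _ _ _ D2), E, <- Hb, <- Hbe.
        field. auto. }
    destruct (derivative_zero_constant t1 t2 (fun x => exp (- al * x) *
       (w x * sin (ga * x) + ((w1 x - al * w x) / ga) * cos (ga * x))) Hint) as [D HD].
    { intros s Hs. destruct (Hw s Hs) as [D1 [D2 E]].
      apply is_derive_Reals. auto_derive.
      - repeat split; auto; first [apply (ex_derive_of_lim _ _ _ D1)|apply (ex_derive_of_lim _ _ _ D2)].
      - rewrite (Derive_of_lim _ _ _ D1), (Derive_of_lim _ _ _ D2), E, <- Hb, <- Hbe.
        field. auto. }
    exists C, D. intros s Hs. rewrite <- (HC s Hs), <- (HD s Hs).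
    assert (Ee : exp (al * s) * exp (- al * s) = 1).
    { rewrite <- exp_plus. replace (al * s + - al * s) with 0 by ring. apply exp_0. }
    assert (Ecs := sin2_cos2 (ga * s)). unfold Rsqr in Ecs.
    transitivity (w s * (exp (al * s) * exp (- al * s)) *
                  (sin (ga * s) * sin (ga * s) + cos (ga * s) * cos (ga * s))).
    { rewrite Ee, Ecs. ring. }
    field. auto.
  - intros [c1 [c2 Hw]]. apply (solves_ode_local _ _ _ _ _ _ Hw).
    exists (fun x => al * (c1 * exp (al * x) * cos (ga * x) + c2 * exp (al * x) * sin (ga * x))
              + ga * (- c1 * exp (al * x) * sin (ga * x) + c2 * exp (al * x) * cos (ga * x))),
           (fun x => (al * al - ga * ga) * (c1 * exp (al * x) * cos (ga * x) + c2 * exp (al * x) * sin (ga * x))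
              + 2 * al * ga * (- c1 * exp (al * x) * sin (ga * x) + c2 * exp (al * x) * cos (ga * x))).
    intros s _. subst. repeat split; try ring; apply is_derive_Reals; auto_derive; auto; ring.
Qed.

End LinearODE.

(* The equation w'' = 3/2 w' - be w arising for zeta = z <> 0, with
   be = (c-3) a/(4 z^2), a = eta + zeta^2 > 0.  Its discriminant 9/4 - 4 be is
   the Delta of statement (3), and Delta has the sign of T - c. *)
Section CharacteristicRegimes.

Variables (t1 t2 z a c : R).
Hypothesis Hint : t1 < t2.
Hypothesis Hz : z <> 0.
Hypothesis Ha : 0 < a.

Let be := (c - 3) * a / (4 * z ^ 2).
Let Delta := 9 / 4 - (c - 3) * a / z ^ 2.
Let T := 9 * z ^ 2 / (4 * a) + 3.

Lemma Delta_sign : Delta = (T - c) * a / z ^ 2.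
Proof. unfold Delta, T. field. split; [lra|auto]. Qed.

Lemma be_of_Delta : be = (9 / 4 - Delta) / 4.
Proof. unfold be, Delta. field. auto. Qed.

Lemma regime_distinct_roots w : c < T ->
  solves_ode t1 t2 (3 / 2) be w <->
  exists c1 c2, forall s, t1 < s < t2 ->
    w s = c1 * exp ((3 / 2 + sqrt Delta) / 2 * s) + c2 * exp ((3 / 2 - sqrt Delta) / 2 * s).
Proof.
  intros HcT. assert (Hz2 : 0 < z ^ 2) by (apply pow2_gt_0; auto).
  assert (HD : 0 < Delta) by (rewrite Delta_sign; apply Rdiv_lt_0_compat; nra).
  assert (Hsq := sqrt_lt_R0 _ HD). assert (Hsq2 := sqrt_sqrt _ (Rlt_le _ _ HD)).
  apply ode_distinct_roots; [exact Hint|lra|field|].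
  rewrite be_of_Delta. transitivity ((9 / 4 - sqrt Delta * sqrt Delta) / 4); [field|].
  rewrite Hsq2. reflexivity.
Qed.

Lemma regime_double_root w : c = T ->
  solves_ode t1 t2 (3 / 2) be w <->
  exists c1 c2, forall s, t1 < s < t2 -> w s = c1 * exp (3 / 4 * s) + c2 * s * exp (3 / 4 * s).
Proof.
  intros HcT. assert (Hz2 : 0 < z ^ 2) by (apply pow2_gt_0; auto).
  apply ode_double_root; [exact Hint|field|].
  rewrite be_of_Delta, Delta_sign, HcT. field. lra.
Qed.

Lemma regime_complex_roots w : c > T ->
  solves_ode t1 t2 (3 / 2) be w <->
  exists c1 c2, forall s, t1 < s < t2 ->
    w s = c1 * exp (3 / 4 * s) * cos (sqrt (- Delta) / 2 * s)
        + c2 * exp (3 / 4 * s) * sin (sqrt (- Delta) / 2 * s).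
Proof.
  intros HcT. assert (Hz2 : 0 < z ^ 2) by (apply pow2_gt_0; auto).
  assert (HD : 0 < - Delta).
  { rewrite Delta_sign. replace (- ((T - c) * a / z ^ 2)) with ((c - T) * a / z ^ 2) by (field; lra).
    apply Rdiv_lt_0_compat; nra. }
  assert (Hsq := sqrt_lt_R0 _ HD). assert (Hsq2 := sqrt_sqrt _ (Rlt_le _ _ HD)).
  apply ode_complex_roots; [exact Hint|lra|field|].
  rewrite be_of_Delta. transitivity (9 / 16 + sqrt (- Delta) * sqrt (- Delta) / 4); [field|].
  rewrite Hsq2. field.
Qed.

End CharacteristicRegimes.

Definition logder (f : R -> R) (t : R) : R := Dt f t / f t.
Definition dlogder (f : R -> R) (t : R) : R :=
  (Dt (Dt f) t * f t - Dt f t * Dt f t) / (f t * f t).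

Definition scal_reduced (z e : R) (f : R -> R) (t : R) : R :=
  - 2 * z * dlogder f t - (e + z ^ 2) * logder f t ^ 2 + 3 * z * logder f t + 3.

Definition case2_shapes (t1 t2 e c : R) (phi : R -> R) : Prop :=
  ~ (c > 3) /\
  (c = 3 -> exists k0, forall t, t1 < t < t2 -> phi t = k0) /\
  (c < 3 -> exists c0, 0 < c0 /\ exists s, (s = 1 \/ s = -1) /\
     forall t, t1 < t < t2 -> phi t = c0 * exp (s * sqrt (- (c - 3) / e) * t)).

Definition case3_shapes (t1 t2 z a c : R) (phi : R -> R) : Prop :=
  let Delta := 9 / 4 - (c - 3) * a / z ^ 2 in
  let T := 9 * z ^ 2 / (4 * a) + 3 in
  (c < T -> exists c1 c2, forall t, t1 < t < t2 ->
     let w := c1 * exp ((3 / 2 + sqrt Delta) / 2 * t)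
            + c2 * exp ((3 / 2 - sqrt Delta) / 2 * t) in
     0 < w /\ phi t = Rpower w (2 * z / a)) /\
  (c = T -> exists c1 c2, forall t, t1 < t < t2 ->
     let w := c1 * exp (3 / 4 * t) + c2 * t * exp (3 / 4 * t) in
     0 < w /\ phi t = Rpower w (2 * z / a)) /\
  (c > T -> exists c1 c2, forall t, t1 < t < t2 ->
     let w := c1 * exp (3 / 4 * t) * cos (sqrt (- Delta) / 2 * t)
            + c2 * exp (3 / 4 * t) * sin (sqrt (- Delta) / 2 * t) in
     0 < w /\ phi t = Rpower w (2 * z / a)).

Section Warping.

Variables (t1 t2 : R) (phi : R -> R).
Hypothesis Hint : t1 < t2.
Hypothesis Hpos : forall t, t1 < t < t2 -> 0 < phi t.
Hypothesis Hd1 : forall t, t1 < t < t2 -> derivable_pt_lim phi t (Dt phi t).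
Hypothesis Hd2 : forall t, t1 < t < t2 -> derivable_pt_lim (Dt phi) t (Dt (Dt phi) t).

Lemma midpoint_in : t1 < (t1 + t2) / 2 < t2.
Proof. lra. Qed.

Lemma derivable_logder t : t1 < t < t2 ->
  derivable_pt_lim (logder phi) t (dlogder phi t).
Proof.
  intros Ht. assert (P := Hpos t Ht).
  exact (derivable_pt_lim_div _ _ t _ _ (Hd2 t Ht) (Hd1 t Ht) ltac:(lra)).
Qed.

(* (phi^q)' = q u phi^q: the metric coefficients are such powers. *)
Lemma Dt_power q t : t1 < t < t2 ->
  Dt (fun s => Rpower (phi s) q) t = q * logder phi t * Rpower (phi t) q.
Proof. intros Ht. apply Dt_eq, derivable_Rpower_comp; auto. Qed.

(* Derivatives of the three kinds of expressions occurring as Christoffel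
   symbols: c u, c u - d and c u phi^q. *)
Lemma derivable_scaled_logder c t : t1 < t < t2 ->
  derivable_pt_lim (fun s => c * logder phi s) t (c * dlogder phi t).
Proof. intros Ht. exact (derivable_pt_lim_scal _ c t _ (derivable_logder t Ht)). Qed.

Lemma derivable_shifted_logder c d t : t1 < t < t2 ->
  derivable_pt_lim (fun s => c * logder phi s - d) t (c * dlogder phi t).
Proof.
  intros Ht. replace (c * dlogder phi t) with (c * dlogder phi t - 0) by ring.
  exact (derivable_pt_lim_minus _ _ t _ _ (derivable_scaled_logder c t Ht)
           (derivable_pt_lim_const d t)).
Qed.

Lemma derivable_logder_power c q t : t1 < t < t2 ->
  derivable_pt_lim (fun s => c * logder phi s * Rpower (phi s) q) t
   (c * (dlogder phi t * Rpower (phi t) q + logder phi t * (q * logder phi t * Rpower (phi t) q))).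
Proof.
  intros Ht.
  assert (H := derivable_pt_lim_mult _ _ t _ _ (derivable_scaled_logder c t Ht)
                 (derivable_Rpower_comp phi t _ q (Hpos t Ht) (Hd1 t Ht))).
  match type of H with derivable_pt_lim _ _ ?l => replace (c * _) with l end; [exact H|].
  unfold logder. ring.
Qed.

Definition ConnK (p1 p2 p3 : R) (k i j : nat) (s : R) : R :=
  let u := logder phi s in
  match k, i, j with
  | 0%nat, 0%nat, 0%nat => -1
  | 0%nat, 1%nat, 1%nat => p1 * u * Rpower (phi s) (2 * p1)
  | 0%nat, 2%nat, 2%nat => p2 * u * Rpower (phi s) (2 * p2)
  | 0%nat, 3%nat, 3%nat => p3 * u * Rpower (phi s) (2 * p3)
  | 1%nat, 0%nat, 1%nat => p1 * u
  | 1%nat, 1%nat, 0%nat => p1 * u - 1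
  | 2%nat, 0%nat, 2%nat => p2 * u
  | 2%nat, 2%nat, 0%nat => p2 * u - 1
  | 3%nat, 0%nat, 3%nat => p3 * u
  | 3%nat, 3%nat, 0%nat => p3 * u - 1
  | _, _, _ => 0
  end.

Definition DConnK (p1 p2 p3 : R) (k i j : nat) (t : R) : R :=
  let u := logder phi t in
  let U := dlogder phi t in
  let dG p := U * Rpower (phi t) (2 * p) + u * (2 * p * u * Rpower (phi t) (2 * p)) in
  match k, i, j with
  | 0%nat, 1%nat, 1%nat => p1 * dG p1
  | 0%nat, 2%nat, 2%nat => p2 * dG p2
  | 0%nat, 3%nat, 3%nat => p3 * dG p3
  | 1%nat, 0%nat, 1%nat => p1 * U
  | 1%nat, 1%nat, 0%nat => p1 * U
  | 2%nat, 0%nat, 2%nat => p2 * U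
  | 2%nat, 2%nat, 0%nat => p2 * U
  | 3%nat, 0%nat, 3%nat => p3 * U
  | 3%nat, 3%nat, 0%nat => p3 * U
  | _, _, _ => 0
  end.

Lemma Conn_closed_form p1 p2 p3 s (k i j : nat) :
  t1 < s < t2 -> (k < 4)%nat -> (i < 4)%nat -> (j < 4)%nat ->
  Conn p1 p2 p3 phi k i j s = ConnK p1 p2 p3 k i j s.
Proof.
  intros Hs Hk Hi Hj.
  assert (P0 := Hpos s Hs).
  assert (R1 := Rpower_pos (phi s) (2 * p1)).
  assert (R2 := Rpower_pos (phi s) (2 * p2)).
  assert (R3 := Rpower_pos (phi s) (2 * p3)).
  destruct k as [|[|[|[|k]]]]; try lia;
  destruct i as [|[|[|[|i]]]]; try lia;
  destruct j as [|[|[|[|j]]]]; try lia;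
  cbv beta iota zeta delta [Conn LC piP kdelta gKinv gK sum4 dcoord expo ConnK Nat.eqb];
  rewrite ?Dt_const, ?(Dt_power _ s Hs); unfold logder; field; lra.
Qed.

Lemma Dt_Conn_closed_form p1 p2 p3 t (k i j : nat) :
  t1 < t < t2 -> (k < 4)%nat -> (i < 4)%nat -> (j < 4)%nat ->
  Dt (fun s => Conn p1 p2 p3 phi k i j s) t = DConnK p1 p2 p3 k i j t.
Proof.
  intros Ht Hk Hi Hj.
  apply (Dt_local t1 t2 _ (fun s => ConnK p1 p2 p3 k i j s)); auto.
  { intros s Hs. apply Conn_closed_form; auto. }
  destruct k as [|[|[|[|k]]]]; try lia;
  destruct i as [|[|[|[|i]]]]; try lia;
  destruct j as [|[|[|[|j]]]]; try lia;
  cbv beta iota zeta delta [ConnK DConnK];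
  first [ apply derivable_pt_lim_const
        | apply (derivable_logder_power _ _ _ Ht)
        | apply (derivable_shifted_logder _ 1 _ Ht)
        | apply (derivable_scaled_logder _ _ Ht) ].
Qed.

Lemma ScalBar_reduced p1 p2 p3 t : t1 < t < t2 ->
  ScalBar p1 p2 p3 phi t = scal_reduced (kzeta p1 p2 p3) (keta p1 p2 p3) phi t.
Proof.
  intros Ht.
  assert (P0 := Hpos t Ht).
  assert (R1 := Rpower_pos (phi t) (2 * p1)).
  assert (R2 := Rpower_pos (phi t) (2 * p2)).
  assert (R3 := Rpower_pos (phi t) (2 * p3)).
  cbv beta iota zeta delta [ScalBar RicBar Curv sum4 dcoord gKinv gK Nat.eqb expo].
  rewrite !(Dt_Conn_closed_form p1 p2 p3 t _ _ _ Ht) by lia.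
  rewrite !(Conn_closed_form p1 p2 p3 t _ _ _ Ht) by lia.
  cbv beta iota zeta delta [ConnK DConnK kzeta keta scal_reduced logder dlogder].
  field. lra.
Qed.

Lemma logder_of_power q w w1 w2 :
  (forall s, t1 < s < t2 -> 0 < w s /\ phi s = Rpower (w s) q) ->
  (forall s, t1 < s < t2 -> derivable_pt_lim w s (w1 s)) ->
  (forall s, t1 < s < t2 -> derivable_pt_lim w1 s (w2 s)) ->
  forall t, t1 < t < t2 ->
    logder phi t = q * w1 t / w t /\
    dlogder phi t = q * (w2 t * w t - w1 t * w1 t) / (w t * w t).
Proof.
  intros Hw H1 H2.
  assert (Hu : forall s, t1 < s < t2 -> logder phi s = q * w1 s / w s).
  { intros s Hs. destruct (Hw s Hs) as [W0 Ws]. unfold logder.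
    rewrite (Dt_local t1 t2 phi (fun x => Rpower (w x) q) s _ (fun x Hx => proj2 (Hw x Hx)) Hs
              (derivable_Rpower_comp w s (w1 s) q W0 (H1 s Hs))).
    rewrite Ws. field. split; [lra | apply Rgt_not_eq, Rpower_pos]. }
  intros t Ht. split; [auto|].
  destruct (Hw t Ht) as [W0 _].
  apply (uniqueness_limite (logder phi) t); [apply derivable_logder; auto|].
  apply (derivable_local t1 t2 _ (fun s => q * w1 s / w s)); auto.
  apply is_derive_Reals. auto_derive.
  - repeat split; first [apply (ex_derive_of_lim _ _ _ (H1 t Ht))
                        | apply (ex_derive_of_lim _ _ _ (H2 t Ht)) | lra].
  - rewrite (Derive_of_lim _ _ _ (H1 t Ht)), (Derive_of_lim _ _ _ (H2 t Ht)). field. lra.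
Qed.

(* For an exponential warping function u is constant and u' = 0. *)
Lemma scal_reduced_exponential z e K L : 0 < K ->
  (forall s, t1 < s < t2 -> phi s = K * exp (L * s)) ->
  forall t, t1 < t < t2 -> scal_reduced z e phi t = 3 + 3 * z * L - (e + z ^ 2) * L ^ 2.
Proof.
  intros HK Hphi t Ht.
  assert (Hw : forall s, t1 < s < t2 -> 0 < K * exp (L * s) /\ phi s = Rpower (K * exp (L * s)) 1).
  { intros s Hs. assert (0 < K * exp (L * s)) by (apply Rmult_lt_0_compat; [lra|apply exp_pos]).
    rewrite Rpower_1; auto. }
  destruct (logder_of_power 1 (fun x => K * exp (L * x)) (fun x => K * L * exp (L * x))
              (fun x => K * L * L * exp (L * x)) Hw) with (t := t) as [Hu HU]; auto.
  1, 2: intros s _; apply is_derive_Reals; auto_derive; auto; ring.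
  assert (E := exp_pos (L * t)).
  unfold scal_reduced. rewrite Hu, HU. field. lra.
Qed.

Lemma exponential_of_logder u0 : (forall s, t1 < s < t2 -> logder phi s = u0) ->
  exists K, 0 < K /\ forall s, t1 < s < t2 -> phi s = K * exp (u0 * s).
Proof.
  intros Hu.
  destruct (linear_first_order t1 t2 u0 phi (Dt phi) Hint Hd1) as [K HK].
  { intros s Hs. rewrite <- (Hu s Hs). unfold logder. field.
    assert (P := Hpos s Hs); lra. }
  exists K. split; [|exact HK].
  assert (Hm := Hpos _ midpoint_in). rewrite (HK _ midpoint_in) in Hm.
  assert (E := exp_pos (u0 * ((t1 + t2) / 2))). nra.
Qed.

(* For phi = w^(2z/(e+z^2)) the quadratic term disappears from Sbar. *)
Lemma scal_reduced_power z e w w1 w2 : z <> 0 -> e + z ^ 2 <> 0 ->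
  (forall s, t1 < s < t2 -> 0 < w s /\ phi s = Rpower (w s) (2 * z / (e + z ^ 2))) ->
  (forall s, t1 < s < t2 -> derivable_pt_lim w s (w1 s)) ->
  (forall s, t1 < s < t2 -> derivable_pt_lim w1 s (w2 s)) ->
  forall t, t1 < t < t2 ->
    scal_reduced z e phi t = 3 + 2 * z ^ 2 / (e + z ^ 2) * (3 * w1 t - 2 * w2 t) / w t.
Proof.
  intros Hz Ha Hw H1 H2 t Ht.
  destruct (logder_of_power _ w w1 w2 Hw H1 H2 t Ht) as [Hu HU].
  destruct (Hw t Ht) as [W0 _].
  unfold scal_reduced. rewrite Hu, HU. field. repeat split; lra.
Qed.

Lemma scal_ode_equiv z a c W W1 W2 : z <> 0 -> a <> 0 -> W <> 0 ->
  3 + 2 * z ^ 2 / a * (3 * W1 - 2 * W2) / W = c <->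
  W2 = 3 / 2 * W1 - (c - 3) * a / (4 * z ^ 2) * W.
Proof.
  intros Hz Ha HW. assert (Hz2 : z ^ 2 <> 0) by (apply pow_nonzero; auto).
  split; intros E.
  - rewrite <- E. field. auto.
  - rewrite E. field. auto.
Qed.

Lemma logder_constant_of_square e c : 0 < e ->
  (forall s, t1 < s < t2 -> e * logder phi s ^ 2 = 3 - c) ->
  c <= 3 /\ exists u0, e * u0 ^ 2 = 3 - c /\ forall s, t1 < s < t2 -> logder phi s = u0.
Proof.
  intros He HF. split.
  { assert (H := HF _ midpoint_in).
    assert (0 <= e * logder phi ((t1 + t2) / 2) ^ 2)
      by (apply Rmult_le_pos; [lra|apply pow2_ge_0]). lra. }
  destruct (Req_dec c 3) as [H3|H3].
  - exists 0. split; [subst; ring|]. intros s Hs.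
    assert (H := HF s Hs). rewrite H3 in H.
    assert (Hsq : logder phi s * logder phi s = 0) by nra.
    destruct (Rmult_integral _ _ Hsq); auto.
  - destruct (square_const_constant t1 t2 (logder phi) (dlogder phi) ((3 - c) / e) Hint)
      as [u0 Hu0].
    + intros H0. apply H3. apply (Rmult_eq_reg_r (/ e)); [|apply Rinv_neq_0_compat; lra].
      unfold Rdiv in H0. lra.
    + exact derivable_logder.
    + intros s Hs. rewrite <- (HF s Hs). field. lra.
    + exists u0. split; [|exact Hu0].
      rewrite <- (HF _ midpoint_in), (Hu0 _ midpoint_in). reflexivity.
Qed.

Lemma case2_shapes_exponential e c : 0 < e -> case2_shapes t1 t2 e c phi ->
  exists K L, 0 < K /\ e * L ^ 2 = 3 - c /\ forall s, t1 < s < t2 -> phi s = K * exp (L * s).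
Proof.
  intros He [Hn [H3 Hlt]].
  destruct (Rtotal_order c 3) as [h|[h|h]].
  - destruct (Hlt h) as [c0 [Hc0 [sg [Hsg Hph]]]].
    exists c0, (sg * sqrt (- (c - 3) / e)). split; [exact Hc0|split; [|exact Hph]].
    replace ((sg * sqrt (- (c - 3) / e)) ^ 2)
      with ((sg * sg) * (sqrt (- (c - 3) / e) * sqrt (- (c - 3) / e))) by ring.
    rewrite sqrt_sqrt by (apply Rdiv_le_0_compat; lra).
    destruct Hsg as [-> | ->]; field; lra.
  - destruct (H3 h) as [k0 Hk0].
    exists k0, 0. split; [rewrite <- (Hk0 _ midpoint_in); apply Hpos, midpoint_in|].
    split; [rewrite h; ring|].
    intros s Hs. rewrite (Hk0 s Hs), Rmult_0_l, exp_0. ring.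
  - exfalso. exact (Hn h).
Qed.

Lemma case2_classification e c : 0 < e ->
  (forall t, t1 < t < t2 -> scal_reduced 0 e phi t = c) <-> case2_shapes t1 t2 e c phi.
Proof.
  intros He. split.
  - intros Hc.
    assert (HF : forall s, t1 < s < t2 -> e * logder phi s ^ 2 = 3 - c).
    { intros s Hs. rewrite <- (Hc s Hs). unfold scal_reduced. ring. }
    destruct (logder_constant_of_square e c He HF) as [Hle [u0 [Hu0 Hu]]].
    destruct (exponential_of_logder u0 Hu) as [K [HK Hphi]].
    split; [lra|split].
    + intros H3. exists K. intros s Hs. rewrite (Hphi s Hs).
      assert (Hz : u0 = 0).
      { destruct (Req_dec u0 0) as [H0|H0]; [exact H0|].
        assert (P := pow_nonzero u0 2 H0). rewrite H3 in Hu0.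
        destruct (Rmult_integral e (u0 ^ 2)); lra. }
      rewrite Hz, Rmult_0_l, exp_0. ring.
    + intros H3. exists K. split; [exact HK|].
      (* the exponent is +-|u0| *)
      assert (Hk : sqrt (- (c - 3) / e) = Rabs u0).
      { rewrite <- sqrt_Rsqr_abs. f_equal. unfold Rsqr.
        replace (- (c - 3)) with (3 - c) by ring. rewrite <- Hu0. field. lra. }
      rewrite Hk. destruct (Rle_dec 0 u0) as [Hs0|Hs0].
      * exists 1. split; [left; auto|]. intros s Hs.
        rewrite Rabs_right, Rmult_1_l by lra. auto.
      * exists (-1). split; [right; auto|]. intros s Hs.
        rewrite Rabs_left by lra. replace (-1 * - u0) with u0 by ring. auto.
  - intros Hshapes.
    destruct (case2_shapes_exponential e c He Hshapes) as [K [L [HK [HL Hphi]]]].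
    intros t Ht. rewrite (scal_reduced_exponential 0 e K L HK Hphi t Ht). nra.
Qed.

Lemma scal_const_iff_root z e c : z <> 0 -> 0 < e + z ^ 2 ->
  (forall t, t1 < t < t2 -> scal_reduced z e phi t = c) <->
  exists w, (forall s, t1 < s < t2 -> 0 < w s /\ phi s = Rpower (w s) (2 * z / (e + z ^ 2))) /\
    solves_ode t1 t2 (3 / 2) ((c - 3) * (e + z ^ 2) / (4 * z ^ 2)) w.
Proof.
  intros Hz Ha. set (a := e + z ^ 2) in *. assert (Ha0 : a <> 0) by lra. split.
  - intros Hc. set (r := a / (2 * z)).
    set (w := fun s => Rpower (phi s) r).
    set (w1 := fun s => r * logder phi s * Rpower (phi s) r).
    set (w2 := fun s => r * (dlogder phi s * Rpower (phi s) r
                             + logder phi s * (r * logder phi s * Rpower (phi s) r))).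
    assert (Hroot : forall s, t1 < s < t2 -> 0 < w s /\ phi s = Rpower (w s) (2 * z / a)).
    { intros s Hs. split; [apply Rpower_pos|]. unfold w. rewrite Rpower_mult.
      replace (r * (2 * z / a)) with 1 by (unfold r; field; split; lra).
      rewrite Rpower_1; auto. }
    assert (D1 : forall s, t1 < s < t2 -> derivable_pt_lim w s (w1 s)).
    { intros s Hs. exact (derivable_Rpower_comp phi s _ r (Hpos s Hs) (Hd1 s Hs)). }
    assert (D2 : forall s, t1 < s < t2 -> derivable_pt_lim w1 s (w2 s)).
    { intros s Hs. apply derivable_logder_power; auto. }
    exists w. split; [exact Hroot|]. exists w1, w2. intros s Hs. repeat split; auto.
    apply (scal_ode_equiv z a); auto; [apply Rgt_not_eq, Rpower_pos|].
    rewrite <- (Hc s Hs). symmetry.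
    exact (scal_reduced_power z e w w1 w2 Hz Ha0 Hroot D1 D2 s Hs).
  - intros [w [Hroot [w1 [w2 Hode]]]] t Ht.
    assert (D1 : forall s, t1 < s < t2 -> derivable_pt_lim w s (w1 s)) by (apply Hode).
    assert (D2 : forall s, t1 < s < t2 -> derivable_pt_lim w1 s (w2 s)) by (apply Hode).
    rewrite (scal_reduced_power z e w w1 w2 Hz Ha0 Hroot D1 D2 t Ht).
    destruct (Hroot t Ht) as [W0 _].
    apply scal_ode_equiv; auto; [lra|]. apply Hode; auto.
Qed.

Lemma case3_classification z e c : z <> 0 -> 0 <= e ->
  (forall t, t1 < t < t2 -> scal_reduced z e phi t = c) <->
  case3_shapes t1 t2 z (e + z ^ 2) c phi.
Proof.
  intros Hz He.
  assert (Ha : 0 < e + z ^ 2) by (assert (0 < z ^ 2) by (apply pow2_gt_0; auto); lra).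
  rewrite scal_const_iff_root by auto. split.
  - intros [w [Hroot Hode]].
    assert (Hshape : forall f : R -> R, (forall s, t1 < s < t2 -> w s = f s) ->
              forall s, t1 < s < t2 -> 0 < f s /\ phi s = Rpower (f s) (2 * z / (e + z ^ 2))).
    { intros f Hf s Hs. rewrite <- (Hf s Hs). exact (Hroot s Hs). }
    split; [|split]; intros HcT.
    + destruct (proj1 (regime_distinct_roots t1 t2 z _ c Hint Hz Ha w HcT) Hode) as [c1 [c2 Hw]].
      exists c1, c2. exact (Hshape _ Hw).
    + destruct (proj1 (regime_double_root t1 t2 z _ c Hint Hz Ha w HcT) Hode) as [c1 [c2 Hw]].
      exists c1, c2. exact (Hshape _ Hw).
    + destruct (proj1 (regime_complex_roots t1 t2 z _ c Hint Hz Ha w HcT) Hode) as [c1 [c2 Hw]].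
      exists c1, c2. exact (Hshape _ Hw).
  - intros [H1 [H2 H3]].
    destruct (Rtotal_order c (9 * z ^ 2 / (4 * (e + z ^ 2)) + 3)) as [h|[h|h]].
    + destruct (H1 h) as [c1 [c2 Hw]]. eexists; split; [exact Hw|].
      apply (regime_distinct_roots t1 t2 z _ c Hint Hz Ha _ h). exists c1, c2. reflexivity.
    + destruct (H2 h) as [c1 [c2 Hw]]. eexists; split; [exact Hw|].
      apply (regime_double_root t1 t2 z _ c Hint Hz Ha _ h). exists c1, c2. reflexivity.
    + destruct (H3 h) as [c1 [c2 Hw]]. eexists; split; [exact Hw|].
      apply (regime_complex_roots t1 t2 z _ c Hint Hz Ha _ h). exists c1, c2. reflexivity.
Qed.

Lemma scal_reduced_const_iff z e c : 0 <= e ->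
  (forall t, t1 < t < t2 -> scal_reduced z e phi t = c) <->
  (z = 0 /\ e = 0 /\ c = 3) \/
  (z = 0 /\ e <> 0 /\ case2_shapes t1 t2 e c phi) \/
  (z <> 0 /\ case3_shapes t1 t2 z (e + z ^ 2) c phi).
Proof.
  intros He. destruct (Req_dec z 0) as [Hz|Hz]; [subst z; destruct (Req_dec e 0) as [He0|He0]|].
  - subst e. assert (H3 : forall t, scal_reduced 0 0 phi t = 3)
      by (intros; unfold scal_reduced; ring).
    split.
    + intros H. left. repeat split. rewrite <- (H _ midpoint_in). auto.
    + intros [[_ [_ Hc]]|[[_ [He0 _]]|[Hz _]]]; [|lra|lra].
      intros t _. rewrite H3. auto.
  - rewrite case2_classification by lra.
    split; [tauto|]. intros [[_ [He' _]]|[[_ [_ H]]|[Hz _]]]; [lra|exact H|lra].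
  - rewrite case3_classification by auto. tauto.
Qed.

End Warping.

Theorem theorem5p6 (t1 t2 p1 p2 p3 : R) (phi : R -> R)
  (Ht : t1 < t2)
  (Hpos : forall t, t1 < t < t2 -> 0 < phi t)
  (Hsm : smooth_on t1 t2 phi)
  (c : R) :
  (forall t, t1 < t < t2 -> ScalBar p1 p2 p3 phi t = c) <->
  ( (* (1) *)
    (kzeta p1 p2 p3 = 0 /\ keta p1 p2 p3 = 0 /\ c = 3)
  \/ (* (2) *)
    (kzeta p1 p2 p3 = 0 /\ keta p1 p2 p3 <> 0 /\
     ~ (c > 3) /\
     (c = 3 -> exists k0, forall t, t1 < t < t2 -> phi t = k0) /\
     (c < 3 -> exists c0, 0 < c0 /\ exists s, (s = 1 \/ s = -1) /\
        forall t, t1 < t < t2 ->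
          phi t = c0 * exp (s * sqrt (- (c - 3) / keta p1 p2 p3) * t)))
  \/ (* (3) *)
    (kzeta p1 p2 p3 <> 0 /\
     let z := kzeta p1 p2 p3 in
     let a := keta p1 p2 p3 + z ^ 2 in
     let Delta := 9 / 4 - (c - 3) * a / z ^ 2 in
     let T := 9 * z ^ 2 / (4 * a) + 3 in
     (c < T -> exists c1 c2, forall t, t1 < t < t2 ->
        let w := c1 * exp ((3 / 2 + sqrt Delta) / 2 * t)
               + c2 * exp ((3 / 2 - sqrt Delta) / 2 * t) in
        0 < w /\ phi t = Rpower w (2 * z / a)) /\
     (c = T -> exists c1 c2, forall t, t1 < t < t2 ->
        let w := c1 * exp (3 / 4 * t) + c2 * t * exp (3 / 4 * t) in
        0 < w /\ phi t = Rpower w (2 * z / a)) /\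
     (c > T -> exists c1 c2, forall t, t1 < t < t2 ->
        let w := c1 * exp (3 / 4 * t) * cos (sqrt (- Delta) / 2 * t)
               + c2 * exp (3 / 4 * t) * sin (sqrt (- Delta) / 2 * t) in
        0 < w /\ phi t = Rpower w (2 * z / a)))).
Proof.
  assert (Hd1 := smooth_derivable t1 t2 phi 0 Hsm).
  assert (Hd2 := smooth_derivable t1 t2 phi 1 Hsm).
  simpl in Hd1, Hd2.
  assert (He : 0 <= keta p1 p2 p3) by (unfold keta; nra).
  assert (Hscal : (forall t, t1 < t < t2 -> ScalBar p1 p2 p3 phi t = c) <->
                  (forall t, t1 < t < t2 -> scal_reduced (kzeta p1 p2 p3) (keta p1 p2 p3) phi t = c)).
  { split; intros H t Ht'; rewrite <- (H t Ht'), (ScalBar_reduced t1 t2 phi); auto. }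
  rewrite Hscal.
  exact (scal_reduced_const_iff t1 t2 phi Ht Hpos Hd1 Hd2 _ _ c He).
Qed.
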